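(* Let $(X,d)$ be a compact metric space and let $f\in\mathcal{H}(X)$ be equicontinuous. If $\dim X=0$ and $X=\overline{Per(f)}$, then $f$ has the periodic shadowing property.
   Context: Equicontinuous: for every $\epsilon>0$ there is $\delta>0$ with $d(x,y)\le\delta\Rightarrow\sup_{i\in\mathbb{Z}}d(f^i(x),f^i(y))\le\epsilon$. $Per(f)$ is the set of periodic points. $f$ has the periodic shadowing property if for every $\epsilon>0$ there is $\delta>0$ such that for every $(x_i)_{i=0}^m$, $m\ge1$, with $d(f(x_i),x_{i+1})\le\delta$ for $0\le i<m$ and $x_0=x_m$, there is $p\in Per(f)$ with $d(x_i,f^i(p))\le\epsilon$ for $0\le i\le m$. *)

From Stdlib Require Import Reals ZArith List.
Open Scope R_scope.

Section MetricDefs.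
Context {X : Type} (d : X -> X -> R).

Definition is_metric : Prop :=
  (forall x y, 0 <= d x y) /\
  (forall x y, d x y = 0 <-> x = y) /\
  (forall x y, d x y = d y x) /\
  (forall x y z, d x z <= d x y + d y z).

Definition is_open (U : X -> Prop) : Prop :=
  forall x, U x -> exists r, 0 < r /\ forall y, d x y < r -> U y.

Definition is_closed (U : X -> Prop) : Prop :=
  is_open (fun x => ~ U x).

Definition is_compact : Prop :=
  forall (I : Type) (U : I -> X -> Prop),
    (forall i, is_open (U i)) ->
    (forall x, exists i, U i x) ->
    exists l : list I, forall x, exists i, In i l /\ U i x.

Definition continuous (f : X -> X) : Prop :=
  forall x eps, 0 < eps -> exists delta, 0 < delta /\
    forall y, d x y < delta -> d (f x) (f y) < eps.

Definition is_homeo (f g : X -> X) : Prop :=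
  continuous f /\ continuous g /\
  (forall x, g (f x) = x) /\ (forall x, f (g x) = x).

(* topological (small inductive) dimension zero: X is nonempty and has a
   base of clopen sets *)
Definition dim_zero : Prop :=
  (exists x : X, True) /\
  forall x eps, 0 < eps -> exists U : X -> Prop,
    is_open U /\ is_closed U /\ U x /\ (forall y, U y -> d x y < eps).

End MetricDefs.

Definition iterZ {X : Type} (f g : X -> X) (i : Z) (x : X) : X :=
  match i with
  | Z0 => x
  | Zpos p => Nat.iter (Pos.to_nat p) f x
  | Zneg p => Nat.iter (Pos.to_nat p) g x
  end.

Definition equicontinuous {X : Type} (d : X -> X -> R) (f g : X -> X) : Prop :=
  forall eps, 0 < eps -> exists delta, 0 < delta /\
    forall x y, d x y <= delta ->
      forall i : Z, d (iterZ f g i x) (iterZ f g i y) <= eps.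

Definition periodic {X : Type} (f : X -> X) (p : X) : Prop :=
  exists n : nat, (1 <= n)%nat /\ Nat.iter n f p = p.

Definition per_dense {X : Type} (d : X -> X -> R) (f : X -> X) : Prop :=
  forall x eps, 0 < eps -> exists p, periodic f p /\ d x p < eps.

Definition periodic_shadowing {X : Type} (d : X -> X -> R) (f : X -> X) : Prop :=
  forall eps, 0 < eps -> exists delta, 0 < delta /\
    forall (m : nat) (xs : nat -> X), (1 <= m)%nat ->
      (forall i, (i < m)%nat -> d (f (xs i)) (xs (S i)) <= delta) ->
      xs 0%nat = xs m ->
      exists p, periodic f p /\
        forall i, (i <= m)%nat -> d (xs i) (Nat.iter i f p) <= eps.

From Stdlib Require Import Reals ZArith List.
From Stdlib Require Import Lra Lia Classical.
Open Scope R_scope.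

(* Since X is compact and zero-dimensional, finitely many clopen sets of
   diameter < eps cover X; "lying in the same sets of this cover" is an
   equivalence relation with open classes, so by compactness it has a
   Lebesgue number gamma.  Equicontinuity gives delta such that
   delta-close points have gamma-close orbits, hence orbits that stay in
   the same classes forever.  Following a delta-pseudo-orbit step by step,
   the orbit of any point delta-close to x_0 (which may be chosen periodic)
   therefore stays in the class of x_i at time i, i.e. eps-shadows it. *)

Lemma iterZ_of_nat {X : Type} (f g : X -> X) (n : nat) (x : X) :
  iterZ f g (Z.of_nat n) x = Nat.iter n f x.
Proof.
  destruct n as [|n]; simpl; [reflexivity|].
  now rewrite SuccNat2Pos.id_succ.
Qed.

Lemma list_pos_lower_bound {A : Type} (r : A -> R) (l : list A) :
  (forall a, In a l -> 0 < r a) ->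
  exists gamma, 0 < gamma /\ forall a, In a l -> gamma <= r a.
Proof.
  induction l as [|a l IH]; intros Hpos.
  - exists 1; split; [lra | intros _ []].
  - destruct IH as [gamma [Hgamma Hle]]; [intros b Hb; apply Hpos; now right|].
    exists (Rmin (r a) gamma); split.
    + apply Rmin_pos; [apply Hpos; now left | exact Hgamma].
    + intros b [<- | Hb]; [apply Rmin_l|].
      eapply Rle_trans; [apply Rmin_r | now apply Hle].
Qed.

Lemma pseudo_orbit_related {X : Type} (d : X -> X -> R) (f : X -> X)
    (rel : X -> X -> Prop) (delta : R) (m : nat) (xs : nat -> X) (p : X) :
  (forall x y z, rel x y -> rel y z -> rel x z) ->
  (forall x y, d x y <= delta -> forall n, rel (Nat.iter n f x) (Nat.iter n f y)) ->
  d p (xs 0%nat) <= delta ->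
  (forall i, (i < m)%nat -> d (f (xs i)) (xs (S i)) <= delta) ->
  forall i, (i <= m)%nat -> rel (Nat.iter i f p) (xs i).
Proof.
  intros rel_trans close_rel Hp Hxs.
  enough (Horbit : forall i, (i <= m)%nat -> forall n,
            rel (Nat.iter n f (Nat.iter i f p)) (Nat.iter n f (xs i))).
  { intros i Hi. exact (Horbit i Hi 0%nat). }
  induction i as [|i IH]; intros Hi n.
  - now apply close_rel.
  - apply rel_trans with (Nat.iter n f (f (xs i))).
    + change (Nat.iter (S i) f p) with (f (Nat.iter i f p)).
      rewrite <- !Nat.iter_succ_r. apply IH. lia.
    + apply close_rel, Hxs. lia.
Qed.

Section CompactMetric.
Context {X : Type} (d : X -> X -> R).
Hypothesis d_metric : is_metric d.
Hypothesis X_compact : is_compact d.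

Let d_self x : d x x = 0.
Proof. destruct d_metric as [_ [Hzero _]]. now apply Hzero. Qed.

Let d_sym x y : d x y = d y x.
Proof. destruct d_metric as [_ [_ [Hsym _]]]. apply Hsym. Qed.

Let d_tri x y z : d x z <= d x y + d y z.
Proof. destruct d_metric as [_ [_ [_ Htri]]]. apply Htri. Qed.

Lemma ball_open (c : X) (r : R) : is_open d (fun y => d c y < r).
Proof.
  intros x Hx. exists (r - d c x); split; [lra|].
  intros y Hy. pose proof (d_tri c x y). lra.
Qed.

(* Compactness applied to the cover by the balls B(c, r) such that
   B(c, 2r) lies in the class of c. *)
Lemma lebesgue_number (rel : X -> X -> Prop) :
  (forall x y, rel x y -> rel y x) ->
  (forall x y z, rel x y -> rel y z -> rel x z) ->
  (forall x, exists r, 0 < r /\ forall y, d x y < r -> rel x y) ->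
  exists gamma, 0 < gamma /\ forall x y, d x y < gamma -> rel x y.
Proof.
  intros rel_sym rel_trans rel_local.
  set (good := fun cr : X * R =>
         0 < snd cr /\ forall y, d (fst cr) y < 2 * snd cr -> rel (fst cr) y).
  destruct (X_compact {cr | good cr}
              (fun cr y => d (fst (proj1_sig cr)) y < snd (proj1_sig cr)))
    as [balls Hballs].
  { intros cr. apply ball_open. }
  { intros x. destruct (rel_local x) as [r [Hr Hrel]].
    assert (Hgood : good (x, r / 2)).
    { split; simpl; [lra|]. intros y Hy. apply Hrel. lra. }
    exists (exist _ (x, r / 2) Hgood); simpl. rewrite d_self. lra. }
  destruct (list_pos_lower_bound (fun cr => snd (proj1_sig cr)) balls)
    as [gamma [Hgamma Hle]].
  { intros cr _. apply (proj2_sig cr). }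
  exists gamma; split; [exact Hgamma|].
  intros x y Hxy. destruct (Hballs x) as [ball [Hin Hx]].
  specialize (Hle ball Hin).
  destruct ball as [[c r] [Hr Hc]]; simpl in *.
  apply rel_trans with c.
  - apply rel_sym, Hc. lra.
  - apply Hc. pose proof (d_tri c x y). lra.
Qed.

Definition same_cells (cells : list (X -> Prop)) (x y : X) : Prop :=
  forall U, In U cells -> (U x <-> U y).

Lemma same_cells_sym cells x y : same_cells cells x y -> same_cells cells y x.
Proof. intros H U HU. specialize (H U HU). tauto. Qed.

Lemma same_cells_trans cells x y z :
  same_cells cells x y -> same_cells cells y z -> same_cells cells x z.
Proof.
  intros Hxy Hyz U HU. specialize (Hxy U HU). specialize (Hyz U HU). tauto.
Qed.

Lemma clopen_locally_constant (U : X -> Prop) (x : X) :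
  is_open d U -> is_closed d U ->
  exists r, 0 < r /\ forall y, d x y < r -> (U x <-> U y).
Proof.
  intros Uopen Uclosed.
  destruct (classic (U x)) as [Hx | Hx].
  - destruct (Uopen x Hx) as [r [Hr HU]]. exists r; split; [exact Hr|].
    intros y Hy. split; intros _; [now apply HU | exact Hx].
  - destruct (Uclosed x Hx) as [r [Hr HU]]. exists r; split; [exact Hr|].
    intros y Hy. split; intros HUy; [contradiction | exact (False_ind _ (HU y Hy HUy))].
Qed.

Lemma same_cells_locally (cells : list (X -> Prop)) :
  (forall U, In U cells -> is_open d U /\ is_closed d U) ->
  forall x, exists r, 0 < r /\ forall y, d x y < r -> same_cells cells x y.
Proof.
  intros Hclopen x. induction cells as [|U cells IH].
  - exists 1; split; [lra | intros y _ U []].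
  - destruct IH as [r [Hr Hcells]]; [intros V HV; apply Hclopen; now right|].
    destruct (Hclopen U (or_introl eq_refl)) as [Uopen Uclosed].
    destruct (clopen_locally_constant U x Uopen Uclosed) as [r' [Hr' HU]].
    exists (Rmin r r'); split; [now apply Rmin_pos|].
    intros y Hy V [<- | HV].
    + apply HU. eapply Rlt_le_trans; [exact Hy | apply Rmin_r].
    + apply Hcells; [eapply Rlt_le_trans; [exact Hy | apply Rmin_l] | exact HV].
Qed.

Lemma fine_clopen_cover (eps : R) :
  dim_zero d -> 0 < eps ->
  exists cells : list (X -> Prop),
    (forall U, In U cells -> is_open d U /\ is_closed d U) /\
    (forall x y, same_cells cells x y -> d x y < eps).
Proof.
  intros [_ Hbase] Heps.
  set (small_clopen := fun U : X -> Prop => is_open d U /\ is_closed d U /\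
         exists c, U c /\ forall y, U y -> d c y < eps / 2).
  destruct (X_compact {U | small_clopen U} (@proj1_sig _ _)) as [cover Hcover].
  { intros [U HU]. apply HU. }
  { intros x. destruct (Hbase x (eps / 2)) as [U [Uopen [Uclosed [Ux Usmall]]]];
      [lra|].
    exists (exist small_clopen U (conj Uopen (conj Uclosed (ex_intro _ x (conj Ux Usmall))))).
    exact Ux. }
  exists (map (@proj1_sig _ _) cover); split.
  - intros U HU. apply in_map_iff in HU as [V [<- _]].
    destruct (proj2_sig V) as [Vopen [Vclosed _]]. now split.
  - intros x y Hsame. destruct (Hcover x) as [U [Hin Ux]].
    assert (Uy : proj1_sig U y).
    { apply (Hsame (proj1_sig U)); [now apply in_map | exact Ux]. }
    destruct (proj2_sig U) as [_ [_ [c [_ Usmall]]]].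
    pose proof (Usmall x Ux). pose proof (Usmall y Uy).
    pose proof (d_tri x c y). rewrite (d_sym x c) in *. lra.
Qed.

End CompactMetric.

Theorem lemma5p1 (X : Type) (d : X -> X -> R) (f g : X -> X) :
  is_metric d -> is_compact d -> is_homeo d f g ->
  equicontinuous d f g ->
  dim_zero d -> per_dense d f ->
  periodic_shadowing d f.
Proof.
  intros Hmetric Hcompact _ Hequi Hdim Hper eps Heps.
  destruct (fine_clopen_cover d Hmetric Hcompact eps Hdim Heps)
    as [cells [Hclopen Hsmall]].
  destruct (lebesgue_number d Hmetric Hcompact (same_cells cells)
              (same_cells_sym cells) (same_cells_trans cells)
              (same_cells_locally d cells Hclopen))
    as [gamma [Hgamma Hlebesgue]].
  destruct (Hequi (gamma / 2)) as [delta [Hdelta Hclose]]; [lra|].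
  exists delta; split; [exact Hdelta|].
  intros m xs _ Hxs _.
  destruct (Hper (xs 0%nat) delta Hdelta) as [p [Hp Hdp]].
  exists p; split; [exact Hp|].
  intros i Hi. apply Rlt_le, Hsmall, same_cells_sym.
  apply (pseudo_orbit_related d f (same_cells cells) delta m xs p); try assumption.
  - apply same_cells_trans.
  - intros x y Hxy n. apply Hlebesgue.
    specialize (Hclose x y Hxy (Z.of_nat n)). rewrite !iterZ_of_nat in Hclose. lra.
  - destruct Hmetric as [_ [_ [Hsym _]]]. rewrite Hsym. lra.
Qed.
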